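(* Assume (A1) and fix all parameters $A,c,\gamma,\omega,h,d,\sigma,\mu,F^*$ and $b$. Let $\mathcal{B}=\{\beta>0:\ \text{conditions (C1)--(C4) hold with } E=\mu\sigma(1-2b^2\beta)\}$. Then $\mathcal{B}$ is either empty or an open interval $(\beta_a,\beta_b)$ with $0\le\beta_a<\beta_b\le 1/(2b^2)$; in particular $\mathcal{B}\ne(0,+\infty)$. Each of the three possibilities — $\mathcal{B}=\emptyset$ (''neutral'', unconditionally unstable), $\mathcal{B}=(0,\beta_b)$ (''destabilizing''), and $\mathcal{B}=(\beta_a,\beta_b)$ with $\beta_a>0$ (''mixed'') — occurs for suitable values of the fixed parameters satisfying (A1). The same statement holds with the roles of $\beta$ and $b$ exchanged: fixing $\beta$, the set $\{b>0: \text{(C1)--(C4) hold}\}$ is empty or an open interval $(b_a,b_b)$ with $0\le b_a<b_b\le 1/\sqrt{2\beta}$, and the three possibilities all occur.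
   Context: Parameters: $c\in(0,1)$, $\gamma>0$, $\omega\in[0,1]$, $h>0$, $d>0$, $\sigma>0$, $\mu>0$, $b>0$, $\beta>0$ (also $A>0,F^*>0$, which do not enter the conditions). Assumption (A1): $1-c-hd>0$. For a real number $E$, conditions (C1)--(C4) are: (C1) $E>0$ (equivalently, when $E=\mu\sigma(1-2b^2\beta)$, $2b^2\beta-1<0$); (C2) $(2-E)(1+c+2\gamma)-\omega^2dhE>0$; (C3) $1-c+cE+\omega^2dhE+\gamma c-E\gamma-E\gamma c+E^2\gamma-E^2\gamma^2+E\gamma^2-\gamma>0$; (C4) $2\gamma+c-cE-\gamma E-\omega^2dhE<3$. These are the conditions guaranteeing that all eigenvalues of the Jacobian matrix $\begin{pmatrix}c+\gamma&\omega h&-\gamma\\ \omega dE&1-E&0\\1&0&0\end{pmatrix}$ (the Jacobian, at the unbiased steady state $S^*$, of the model map) lie in the open unit disk. *)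

From Stdlib Require Import Reals.
Open Scope R_scope.

(* Standing parameter constraints together with assumption (A1).
   A and F^* do not enter any condition and are omitted. *)
Definition params_ok (c gamma omega h d sigma mu : R) : Prop :=
  0 < c < 1 /\ 0 < gamma /\ 0 <= omega <= 1 /\ 0 < h /\ 0 < d /\
  0 < sigma /\ 0 < mu /\ 1 - c - h * d > 0.

Definition C1 (E : R) : Prop := E > 0.
Definition C2 (c gamma omega h d E : R) : Prop :=
  (2 - E) * (1 + c + 2 * gamma) - omega ^ 2 * d * h * E > 0.
Definition C3 (c gamma omega h d E : R) : Prop :=
  1 - c + c * E + omega ^ 2 * d * h * E + gamma * c - E * gamma
  - E * gamma * c + E ^ 2 * gamma - E ^ 2 * gamma ^ 2 + E * gamma ^ 2
  - gamma > 0.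
Definition C4 (c gamma omega h d E : R) : Prop :=
  2 * gamma + c - c * E - gamma * E - omega ^ 2 * d * h * E < 3.

Definition conds (c gamma omega h d E : R) : Prop :=
  C1 E /\ C2 c gamma omega h d E /\ C3 c gamma omega h d E /\
  C4 c gamma omega h d E.

Definition Eval (sigma mu b beta : R) : R := mu * sigma * (1 - 2 * b ^ 2 * beta).

Definition Bset (c gamma omega h d sigma mu b : R) (beta : R) : Prop :=
  0 < beta /\ conds c gamma omega h d (Eval sigma mu b beta).

Definition bset (c gamma omega h d sigma mu beta : R) (b : R) : Prop :=
  0 < b /\ conds c gamma omega h d (Eval sigma mu b beta).

Definition is_empty (S : R -> Prop) : Prop := forall x, ~ S x.
Definition is_open_interval (S : R -> Prop) (lo hi : R) : Prop :=
  forall x, S x <-> lo < x < hi.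

From Pilot Require Import Defs.
From Stdlib Require Import Reals Lra Psatz Classical.
Open Scope R_scope.

(* As a function of beta (b fixed) or of b > 0 (beta fixed), E = mu sigma (1 - 2 b^2 beta)
   is continuous and decreasing, and it is positive exactly below 1/(2 b^2), resp.
   1/sqrt(2 beta).  The values of E satisfying (C1)-(C4) form an open convex set:
   (C1), (C2), (C4) are linear in E, and (C3) reads
   (1 - gamma) (1 - c - (gamma - c) E + gamma E^2) + omega^2 d h E > 0,
   which holds for every E > 0 when gamma < 1 and is a concave quadratic when gamma >= 1.
   Preimages of an open convex set under a continuous monotone map are open and convex,
   and a bounded open convex subset of R is empty or an open interval.  With omega = 0,
   c = 1/2, h = d = 1/4, the conditions reduce to 0 < E < 2 for gamma = 1/2 and are
   unsatisfiable for gamma = 1, which realizes the three cases. *)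

Definition convex_set (S : R -> Prop) : Prop :=
  forall x y z, S x -> S z -> x <= y <= z -> S y.

Lemma open_set_lt (f g : R -> R) :
  continuity f -> continuity g -> open_set (fun x => f x < g x).
Proof.
  intros Hf Hg.
  apply open_set_P6 with (image_rec (fun x => g x - f x) (fun y => 0 < y)).
  - apply continuity_P2; [reg|].
    intros y Hy. exists (mkposreal y Hy). intros z Hz.
    unfold disc in Hz; simpl in Hz. apply Rabs_def2 in Hz. lra.
  - unfold image_rec; split; intros x; lra.
Qed.

Lemma open_set_lt_upper_bound (S : R -> Prop) (M x : R) :
  open_set S -> is_upper_bound S M -> S x -> x < M.
Proof.
  intros HS HM Sx. destruct (HS x Sx) as [[e He] Hdisc].
  assert (S (x + e / 2)) by (apply Hdisc; unfold disc; simpl; rewrite Rabs_right; lra).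
  assert (x + e / 2 <= M) by auto. lra.
Qed.

Lemma is_lub_approx (S : R -> Prop) (M x : R) :
  is_lub S M -> x < M -> exists s, S s /\ x < s.
Proof.
  intros [_ Hmin] Hx. apply NNPP. intros Hn.
  enough (M <= x) by lra.
  apply Hmin. intros s Ss. apply Rnot_lt_le. intros Hxs. apply Hn. eauto.
Qed.

Lemma open_convex_interval (S : R -> Prop) (lo hi : R) :
  (forall x, S x -> lo < x < hi) -> convex_set S -> open_set S ->
  is_empty S \/
  exists a b, lo <= a /\ a < b /\ b <= hi /\ is_open_interval S a b.
Proof.
  intros Hbnd Hconv Hopen.
  destruct (classic (exists x, S x)) as [[x0 Sx0]|Hnone];
    [right | left; intros x Sx; eauto].
  (* inf S is obtained as - sup Sopp *)
  set (Sopp := fun y => S (- y)).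
  assert (Hopp : open_set Sopp) by (apply (continuity_P2 Ropp); [reg | exact Hopen]).
  destruct (completeness S) as [b Hb].
  { exists hi. intros x Sx. apply Hbnd in Sx. lra. }
  { eauto. }
  destruct (completeness Sopp) as [m Hm].
  { exists (- lo). intros y Sy. apply Hbnd in Sy. lra. }
  { exists (- x0). unfold Sopp. now rewrite Ropp_involutive. }
  assert (Hin : forall x, S x -> - m < x < b).
  { intros x Sx. split.
    - assert (- x < m); [|lra].
      apply (open_set_lt_upper_bound Sopp); [exact Hopp | apply Hm |].
      unfold Sopp. now rewrite Ropp_involutive.
    - exact (open_set_lt_upper_bound S b x Hopen (proj1 Hb) Sx). }
  exists (- m), b. repeat split.
  - assert (m <= - lo); [|lra].
    apply Hm. intros y Sy. apply Hbnd in Sy. lra.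
  - destruct (Hin x0 Sx0). lra.
  - apply Hb. intros x Sx. apply Hbnd in Sx. lra.
  - now apply Hin.
  - now apply Hin.
  - intros [Hmx Hxb].
    destruct (is_lub_approx S b x Hb Hxb) as [z [Sz Hxz]].
    destruct (is_lub_approx Sopp m (- x) Hm ltac:(lra)) as [y [Sy Hy]].
    apply (Hconv (- y) x z); [exact Sy | exact Sz | lra].
Qed.

Lemma open_set_pos_preimage (f : R -> R) (C : R -> Prop) :
  continuity f -> open_set C -> open_set (fun x => 0 < x /\ C (f x)).
Proof.
  intros Hf HC. apply open_set_P3.
  - apply (open_set_lt (fun _ => 0) (fun x => x)); reg.
  - now apply continuity_P2.
Qed.

Lemma convex_set_pos_preimage (f : R -> R) (C : R -> Prop) :
  convex_set C -> (forall x y, 0 < x <= y -> f y <= f x) ->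
  convex_set (fun x => 0 < x /\ C (f x)).
Proof.
  intros HC Hanti x y z [Hx Cx] [Hz Cz] Hy. split; [lra|].
  apply (HC (f z) (f y) (f x)); auto.
  split; apply Hanti; lra.
Qed.

Lemma conds_open (c gamma omega h d : R) : open_set (conds c gamma omega h d).
Proof.
  unfold conds, Defs.C1, C2, C3, C4, Rgt.
  repeat apply open_set_P3; apply open_set_lt; reg.
Qed.

Lemma quadratic_pos_between (a b0 c0 x y z : R) :
  a <= 0 -> 0 < a * x ^ 2 + b0 * x + c0 -> 0 < a * z ^ 2 + b0 * z + c0 ->
  x <= y <= z -> 0 < a * y ^ 2 + b0 * y + c0.
Proof.
  intros Ha Hx Hz Hy.
  destruct (Req_dec y z) as [->|Hyz]; [exact Hz|].
  pose (q t := a * t ^ 2 + b0 * t + c0).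
  change (0 < q x) in Hx; change (0 < q z) in Hz; change (0 < q y).
  assert (Hid : (z - x) * q y = (z - y) * q x + (y - x) * q z
                                - a * ((y - x) * (z - y)) * (z - x))
    by (unfold q; ring).
  assert (0 < (z - y) * q x) by (apply Rmult_lt_0_compat; lra).
  assert (0 <= (y - x) * q z) by (apply Rmult_le_pos; lra).
  assert (0 <= - a * ((y - x) * (z - y)) * (z - x)) by
    (apply Rmult_le_pos; [apply Rmult_le_pos; [lra | apply Rmult_le_pos]|]; lra).
  assert (0 < (z - x) * q y) by lra.
  apply (Rmult_lt_reg_l (z - x)); lra.
Qed.

Lemma C3_small_gamma_factor_pos (c gamma E : R) :
  0 <= c < 1 -> 0 <= gamma < 1 -> 0 < E ->
  0 < 1 - c - (gamma - c) * E + gamma * E ^ 2.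
Proof.
  intros Hc Hg HE. destruct (Rlt_le_dec (gamma * E) 1).
  - assert (0 < (1 - c) * (1 - gamma * E)) by (apply Rmult_lt_0_compat; lra).
    assert (0 <= c * E * (1 - gamma)) by (apply Rmult_le_pos; [apply Rmult_le_pos|]; lra).
    assert (0 <= gamma * E ^ 2) by (apply Rmult_le_pos; [|apply pow2_ge_0]; lra).
    nra.
  - assert (0 < E * (gamma * E - gamma + c)) by (apply Rmult_lt_0_compat; lra).
    nra.
Qed.

Lemma conds_convex (c gamma omega h d : R) :
  0 <= c < 1 -> 0 <= gamma -> 0 <= d * h ->
  convex_set (conds c gamma omega h d).
Proof.
  intros Hc Hg Hdh E1 E E2 [A1 [A2 [A3 A4]]] [B1 [B2 [B3 B4]]] HE.
  unfold conds, Defs.C1, C2, C3, C4 in *.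
  assert (Hk : 0 <= omega ^ 2 * d * h) by
    (rewrite Rmult_assoc; apply Rmult_le_pos; [apply pow2_ge_0 | exact Hdh]).
  set (k := omega ^ 2 * d * h) in *.
  split; [lra|]. split.
  { assert (0 <= (E2 - E) * (1 + c + 2 * gamma + k)) by (apply Rmult_le_pos; lra). lra. }
  split.
  2:{ assert (0 <= (E - E1) * (c + gamma + k)) by (apply Rmult_le_pos; lra). lra. }
  destruct (Rlt_le_dec gamma 1) as [Hg1|Hg1].
  - pose proof (C3_small_gamma_factor_pos c gamma E Hc (conj Hg Hg1) ltac:(lra)).
    assert (0 < (1 - gamma) * (1 - c - (gamma - c) * E + gamma * E ^ 2)) by
      (apply Rmult_lt_0_compat; lra).
    assert (0 <= k * E) by (apply Rmult_le_pos; lra).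
    lra.
  - assert (0 < (gamma - gamma ^ 2) * E ^ 2 + (c + k - gamma - gamma * c + gamma ^ 2) * E
                + (1 - c + gamma * c - gamma)); [|lra].
    apply (quadratic_pos_between _ _ _ E1 E E2); [nra | lra | lra | exact HE].
Qed.

Lemma conds_pos_preimage_structure (c gamma omega h d hi : R) (f : R -> R) :
  0 <= c < 1 -> 0 <= gamma -> 0 <= d * h ->
  continuity f -> (forall x y, 0 < x <= y -> f y <= f x) ->
  (forall x, 0 < x -> Defs.C1 (f x) -> x < hi) ->
  (is_empty (fun x => 0 < x /\ conds c gamma omega h d (f x)) \/
   exists a b, 0 <= a /\ a < b /\ b <= hi /\
     is_open_interval (fun x => 0 < x /\ conds c gamma omega h d (f x)) a b) /\
  ~ (forall x, 0 < x /\ conds c gamma omega h d (f x) <-> 0 < x).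
Proof.
  intros Hc Hg Hdh Hf Hanti Hhi.
  assert (Hbnd : forall x, 0 < x /\ conds c gamma omega h d (f x) -> 0 < x < hi)
    by (intros x [Hx [C _]]; auto).
  split.
  - apply open_convex_interval; [exact Hbnd | |].
    + apply convex_set_pos_preimage; [now apply conds_convex | exact Hanti].
    + apply open_set_pos_preimage; [exact Hf | apply conds_open].
  - intros Hall.
    assert (Hpos : 0 < Rmax 1 hi) by (pose proof (Rmax_l 1 hi); lra).
    apply Hall, Hbnd in Hpos. pose proof (Rmax_r 1 hi). lra.
Qed.

Lemma Eval_pos (sigma mu b beta : R) :
  0 < sigma -> 0 < mu -> Defs.C1 (Eval sigma mu b beta) -> 2 * b ^ 2 * beta < 1.
Proof.
  unfold Defs.C1, Eval. intros Hs Hm HE.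
  assert (0 < mu * sigma) by (apply Rmult_lt_0_compat; lra).
  nra.
Qed.

Lemma Bset_structure (c gamma omega h d sigma mu b : R) :
  params_ok c gamma omega h d sigma mu -> 0 < b ->
  (is_empty (Bset c gamma omega h d sigma mu b) \/
   exists ba bb : R, 0 <= ba /\ ba < bb /\ bb <= 1 / (2 * b ^ 2) /\
     is_open_interval (Bset c gamma omega h d sigma mu b) ba bb) /\
  ~ (forall beta, Bset c gamma omega h d sigma mu b beta <-> 0 < beta).
Proof.
  intros (Hc & Hg & Hw & Hh & Hd & Hs & Hm & _) Hb.
  assert (Hb2 : 0 < 2 * b ^ 2) by (assert (0 < b ^ 2) by (apply pow_lt; lra); lra).
  unfold Bset. apply conds_pos_preimage_structure.
  - lra.
  - lra.
  - apply Rmult_le_pos; lra.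
  - unfold Eval. reg.
  - intros x y Hxy. unfold Eval.
    apply Rmult_le_compat_l; [apply Rmult_le_pos|]; nra.
  - intros x Hx HE. apply Eval_pos in HE; [|lra|lra].
    apply (Rmult_lt_reg_l (2 * b ^ 2)); [lra|].
    replace (2 * b ^ 2 * (1 / (2 * b ^ 2))) with 1 by (field; lra). lra.
Qed.

Lemma bset_structure (c gamma omega h d sigma mu beta : R) :
  params_ok c gamma omega h d sigma mu -> 0 < beta ->
  (is_empty (bset c gamma omega h d sigma mu beta) \/
   exists ba bb : R, 0 <= ba /\ ba < bb /\ bb <= 1 / sqrt (2 * beta) /\
     is_open_interval (bset c gamma omega h d sigma mu beta) ba bb) /\
  ~ (forall b, bset c gamma omega h d sigma mu beta b <-> 0 < b).
Proof.
  intros (Hc & Hg & Hw & Hh & Hd & Hs & Hm & _) Hbeta.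
  assert (Hsqrt : 0 < sqrt (2 * beta)) by (apply sqrt_lt_R0; lra).
  assert (Hsq : sqrt (2 * beta) * sqrt (2 * beta) = 2 * beta) by (apply sqrt_sqrt; lra).
  unfold bset. apply conds_pos_preimage_structure.
  - lra.
  - lra.
  - apply Rmult_le_pos; lra.
  - unfold Eval. reg.
  - intros x y Hxy. unfold Eval.
    assert (x ^ 2 <= y ^ 2) by (apply pow_incr; lra).
    apply Rmult_le_compat_l; [apply Rmult_le_pos|]; nra.
  - intros x Hx HE. apply Eval_pos in HE; [|lra|lra].
    apply (Rmult_lt_reg_r (sqrt (2 * beta))); [lra|].
    replace (1 / sqrt (2 * beta) * sqrt (2 * beta)) with 1 by (field; lra).
    assert (0 < x * sqrt (2 * beta)) by (apply Rmult_lt_0_compat; lra).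
    nra.
Qed.

Lemma params_ok_example (gamma sigma mu : R) :
  0 < gamma -> 0 < sigma -> 0 < mu -> params_ok (1/2) gamma 0 (1/4) (1/4) sigma mu.
Proof. unfold params_ok. lra. Qed.

Lemma conds_example_iff (E : R) : conds (1/2) (1/2) 0 (1/4) (1/4) E <-> 0 < E < 2.
Proof.
  unfold conds, Defs.C1, C2, C3, C4. simpl pow.
  split.
  - intros [H1 [H2 _]]. lra.
  - intros HE. repeat split; try lra.
    assert (0 <= E * E) by nra. nra.
Qed.

Lemma conds_example_unsat (E : R) : ~ conds (1/2) 1 0 (1/4) (1/4) E.
Proof. unfold conds, C3. simpl pow. lra. Qed.

Lemma Bset_can_be_empty : exists c gamma omega h d sigma mu b : R,
  params_ok c gamma omega h d sigma mu /\ 0 < b /\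
  is_empty (Bset c gamma omega h d sigma mu b).
Proof.
  exists (1/2), 1, 0, (1/4), (1/4), 1, 1, 1.
  split; [apply params_ok_example; lra|]. split; [lra|].
  intros beta [_ H]. exact (conds_example_unsat _ H).
Qed.

Lemma Bset_can_be_initial_interval : exists c gamma omega h d sigma mu b bb : R,
  params_ok c gamma omega h d sigma mu /\ 0 < b /\ 0 < bb /\
  is_open_interval (Bset c gamma omega h d sigma mu b) 0 bb.
Proof.
  exists (1/2), (1/2), 0, (1/4), (1/4), 1, 1, 1, (1/2).
  split; [apply params_ok_example; lra|]. split; [lra|]. split; [lra|].
  intros beta. unfold Bset. rewrite conds_example_iff. unfold Eval. simpl pow. lra.
Qed.

Lemma Bset_can_be_inner_interval : exists c gamma omega h d sigma mu b ba bb : R,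
  params_ok c gamma omega h d sigma mu /\ 0 < b /\ 0 < ba /\ ba < bb /\
  is_open_interval (Bset c gamma omega h d sigma mu b) ba bb.
Proof.
  exists (1/2), (1/2), 0, (1/4), (1/4), 1, 4, 1, (1/4), (1/2).
  split; [apply params_ok_example; lra|]. split; [lra|]. split; [lra|]. split; [lra|].
  intros beta. unfold Bset. rewrite conds_example_iff. unfold Eval. simpl pow. lra.
Qed.

Lemma bset_can_be_empty : exists c gamma omega h d sigma mu beta : R,
  params_ok c gamma omega h d sigma mu /\ 0 < beta /\
  is_empty (bset c gamma omega h d sigma mu beta).
Proof.
  exists (1/2), 1, 0, (1/4), (1/4), 1, 1, 1.
  split; [apply params_ok_example; lra|]. split; [lra|].
  intros b [_ H]. exact (conds_example_unsat _ H).
Qed.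

Lemma bset_can_be_initial_interval : exists c gamma omega h d sigma mu beta bb : R,
  params_ok c gamma omega h d sigma mu /\ 0 < beta /\ 0 < bb /\
  is_open_interval (bset c gamma omega h d sigma mu beta) 0 bb.
Proof.
  exists (1/2), (1/2), 0, (1/4), (1/4), 1, 1, (1/2), 1.
  split; [apply params_ok_example; lra|]. split; [lra|]. split; [lra|].
  intros b. unfold bset. rewrite conds_example_iff. unfold Eval. simpl pow.
  split; [intros [Hb [H1 H2]] | intros [Hb H1]]; repeat split; nra.
Qed.

Lemma bset_can_be_inner_interval : exists c gamma omega h d sigma mu beta ba bb : R,
  params_ok c gamma omega h d sigma mu /\ 0 < beta /\ 0 < ba /\ ba < bb /\
  is_open_interval (bset c gamma omega h d sigma mu beta) ba bb.
Proof.
  exists (1/2), (1/2), 0, (1/4), (1/4), 1, (8/3), (1/2), (1/2), 1.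
  split; [apply params_ok_example; lra|]. split; [lra|]. split; [lra|]. split; [lra|].
  intros b. unfold bset. rewrite conds_example_iff. unfold Eval. simpl pow.
  split; [intros [Hb [H1 H2]] | intros [Hb H1]]; repeat split; nra.
Qed.

Theorem proposition5 :
  (forall c gamma omega h d sigma mu b : R,
     params_ok c gamma omega h d sigma mu -> 0 < b ->
     (is_empty (Bset c gamma omega h d sigma mu b) \/
      exists ba bb : R, 0 <= ba /\ ba < bb /\ bb <= 1 / (2 * b ^ 2) /\
        is_open_interval (Bset c gamma omega h d sigma mu b) ba bb) /\
     ~ (forall beta, Bset c gamma omega h d sigma mu b beta <-> 0 < beta)) /\
  (exists c gamma omega h d sigma mu b : R,
     params_ok c gamma omega h d sigma mu /\ 0 < b /\
     is_empty (Bset c gamma omega h d sigma mu b)) /\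
  (exists c gamma omega h d sigma mu b bb : R,
     params_ok c gamma omega h d sigma mu /\ 0 < b /\ 0 < bb /\
     is_open_interval (Bset c gamma omega h d sigma mu b) 0 bb) /\
  (exists c gamma omega h d sigma mu b ba bb : R,
     params_ok c gamma omega h d sigma mu /\ 0 < b /\ 0 < ba /\ ba < bb /\
     is_open_interval (Bset c gamma omega h d sigma mu b) ba bb) /\
  (forall c gamma omega h d sigma mu beta : R,
     params_ok c gamma omega h d sigma mu -> 0 < beta ->
     (is_empty (bset c gamma omega h d sigma mu beta) \/
      exists ba bb : R, 0 <= ba /\ ba < bb /\ bb <= 1 / sqrt (2 * beta) /\
        is_open_interval (bset c gamma omega h d sigma mu beta) ba bb) /\
     ~ (forall b, bset c gamma omega h d sigma mu beta b <-> 0 < b)) /\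
  (exists c gamma omega h d sigma mu beta : R,
     params_ok c gamma omega h d sigma mu /\ 0 < beta /\
     is_empty (bset c gamma omega h d sigma mu beta)) /\
  (exists c gamma omega h d sigma mu beta bb : R,
     params_ok c gamma omega h d sigma mu /\ 0 < beta /\ 0 < bb /\
     is_open_interval (bset c gamma omega h d sigma mu beta) 0 bb) /\
  (exists c gamma omega h d sigma mu beta ba bb : R,
     params_ok c gamma omega h d sigma mu /\ 0 < beta /\ 0 < ba /\ ba < bb /\
     is_open_interval (bset c gamma omega h d sigma mu beta) ba bb).
Proof.
  split; [exact Bset_structure|].
  split; [exact Bset_can_be_empty|].
  split; [exact Bset_can_be_initial_interval|].
  split; [exact Bset_can_be_inner_interval|].
  split; [exact bset_structure|].
  split; [exact bset_can_be_empty|].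
  split; [exact bset_can_be_initial_interval|].
  exact bset_can_be_inner_interval.
Qed.
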